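(* For any vertex $x\in V$, any set $A\subseteq V$, any integer $T\geq 0$ and any $\lambda>0$, the volume-biased evolving set process $(S_t)$ started from $S_0=\{x\}$ satisfies \[ \widehat{\mathbf P}_x\Big[\max_{0\le t\le T}\frac{\mu(S_t\setminus A)}{\mu(S_t)} > \lambda\,\varepsilon_x(T,A)\Big] < \frac1\lambda, \] where $\varepsilon_x(T,A)$ is the probability that a lazy random walk $(X_i)$ started at $X_0=x$ satisfies $X_j\notin A$ for some $j\in\{0,1,\dots,T\}$.
   Context: Let $G=(V,E)$ be a finite simple undirected graph in which every vertex has positive degree $d(x)$. For $S\subseteq V$, $\mu(S)=\sum_{x\in S}d(x)$. The lazy random walk has transition kernel $p(x,y)=1/(2d(x))$ if $\{x,y\}\in E$, $p(x,x)=1/2$, and $0$ otherwise; $p(x,S)=\sum_{y\in S}p(x,y)$. The evolving set process (ESP): from state $S$, pick $U$ uniform on $[0,1]$ and move to $\{y: p(y,S)\geq U\}$; $K(S,S')$ denotes its transition kernel. The volume-biased ESP is the Markov chain on nonempty subsets with kernel $\widehat K(S,S')=\frac{\mu(S')}{\mu(S)}K(S,S')$; $\widehat{\mathbf P}_x$ denotes its law started at $\{x\}$. *)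

From HB Require Import structures.
From mathcomp Require Import all_boot all_order all_algebra.
Set Implicit Arguments. Unset Strict Implicit. Unset Printing Implicit Defensive.
Import Order.TTheory GRing.Theory Num.Theory.
Local Open Scope ring_scope.

(* A finite simple graph on vertex type V is given by a symmetric,
   irreflexive relation e : rel V. *)

Definition deg (V : finType) (e : rel V) (x : V) : nat := #|[set y | e x y]|.

Definition mu (R : realFieldType) (V : finType) (e : rel V) (S : {set V}) : R :=
  \sum_(x in S) (deg e x)%:R.

Definition lazyp (R : realFieldType) (V : finType) (e : rel V) (x y : V) : R :=
  if x == y then 1 / 2
  else if e x y then 1 / (2 * (deg e x)%:R) else 0.

Definition lazypS (R : realFieldType) (V : finType) (e : rel V) (x : V)
    (S : {set V}) : R :=
  \sum_(y in S) lazyp R e x y.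

(* ESP transition kernel K(S,S') = Leb{ U in [0,1] : {y : p(y,S) >= U} = S' }.
   The set of such U is the interval (a, b] intersected with [0,1], where
   b = min_{y in S'} p(y,S) and a = max_{y notin S'} p(y,S) (the values
   p(y,S) all lie in [0,1]); K is the length of that interval. *)
Definition espK (R : realFieldType) (V : finType) (e : rel V)
    (S S' : {set V}) : R :=
  let b := \big[Num.min/1]_(y in S') lazypS R e y S in
  let a := \big[Num.max/0]_(y in ~: S') lazypS R e y S in
  Num.max 0 (b - a).

Definition espKhat (R : realFieldType) (V : finType) (e : rel V)
    (S S' : {set V}) : R :=
  mu R e S' / mu R e S * espK R e S S'.

Definition PhatEvent (R : realFieldType) (V : finType) (e : rel V) (x : V)
    (T : nat) (P : pred {ffun 'I_T.+1 -> {set V}}) : R :=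
  \sum_(S : {ffun 'I_T.+1 -> {set V}} | P S)
     ((S ord0 == [set x])%:R *
      \prod_(i < T) espKhat R e (S (inord i)) (S (inord i.+1))).

Definition RWEvent (R : realFieldType) (V : finType) (e : rel V) (x : V)
    (T : nat) (P : pred {ffun 'I_T.+1 -> V}) : R :=
  \sum_(X : {ffun 'I_T.+1 -> V} | P X)
     ((X ord0 == x)%:R *
      \prod_(i < T) lazyp R e (X (inord i)) (X (inord i.+1))).

Definition escape_eps (R : realFieldType) (V : finType) (e : rel V) (x : V)
    (T : nat) (A : {set V}) : R :=
  RWEvent R e x (fun X => [exists j : 'I_T.+1, X j \notin A]).

Arguments PhatEvent R {V} e x T P.
Arguments RWEvent R {V} e x T P.

(* Idea (Morris-Peres duality).  For f : V -> R let mu_avg f S be the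
   degree-weighted average of f over S.  The volume-biased ESP intertwines
   with the lazy walk: one ESP step followed by mu_avg equals mu_avg of one
   walk step (lemma [intertwining]); this rests on the marginal identity
   P(y in S') = p(y,S) of the threshold construction of the ESP.  Hence the
   walk's survival probability in A, averaged over S_t, is a supermartingale,
   and for any stopping rule its initial value 1 - eps_x(T,A) is bounded by
   the expected mu-proportion of S_tau lying in A.  Stopping at the first t
   with mu(S_t \ A)/mu(S_t) > lam * eps and applying Markov's inequality to
   the gap at the stopping time gives the bound 1/lam. *)

From HB Require Import structures.
From mathcomp Require Import all_boot all_order all_algebra.
Set Implicit Arguments. Unset Strict Implicit. Unset Printing Implicit Defensive.
Import Order.TTheory GRing.Theory Num.Theory.
Local Open Scope ring_scope.

Section ThresholdKernel.
Variables (R : realFieldType) (V : finType) (v : V -> R).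
Hypotheses (v_ge0 : forall z, 0 <= v z) (v_le1 : forall z, v z <= 1).

(* Lebesgue measure of the U in [0,1] for which {z in D | U <= v z} = S:
   the ESP kernel is the case D = setT, v = p(., S). *)
Definition thresholdK (D S : {set V}) : R :=
  Num.max 0 (\big[Num.min/1]_(z in S) v z - \big[Num.max/0]_(z in D :\: S) v z).

(* D itself has measure min_D v (for U below the minimum every z is kept). *)
Lemma thresholdK_full (D : {set V}) :
  thresholdK D D = \big[Num.min/1]_(z in D) v z.
Proof. by rewrite /thresholdK setDv big_set0 subr0; apply/max_idPr/le_bigmin. Qed.

Lemma thresholdK_gap (D S : {set V}) z w :
  z \in S -> w \in D :\: S -> v z <= v w -> thresholdK D S = 0.
Proof.
move=> zS wDS vzw; apply/max_idPl; rewrite subr_le0.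
apply: le_trans (bigmin_le_cond _ _ zS) _; apply: le_trans vzw _.
exact: le_bigmax_cond.
Qed.

(* Removing a minimiser z of v from D: the induction step of the marginal
   identity. *)
Section RemoveMinimum.
Variables (D : {set V}) (z : V).
Hypotheses (zD : z \in D) (zmin : forall w, w \in D -> v z <= v w).

Lemma thresholdK_minus_min :
  thresholdK D (D :\ z) = \big[Num.min/1]_(w in D :\ z) v w - v z.
Proof.
rewrite /thresholdK; have zDDz : z \in D :\: (D :\ z) by rewrite !inE eqxx zD.
have -> : \big[Num.max/0]_(w in D :\: (D :\ z)) v w = v z.
  apply/le_anti; rewrite (le_bigmax_cond _ _ zDDz) andbT.
  apply/bigmax_leP; split=> // w; rewrite !inE => /andP[+ wD].
  by rewrite wD andbT negbK => /eqP->.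
apply/max_idPr; rewrite subr_ge0.
by apply: le_bigmin => // w; rewrite !inE => /andP[_ /zmin].
Qed.

Lemma thresholdK_remove_min (S : {set V}) w :
  S \subset D :\ z -> w \in (D :\ z) :\: S ->
  thresholdK D S = thresholdK (D :\ z) S.
Proof.
move=> SDz wDzS.
have zS : z \notin S by apply/negP => /(subsetP SDz); rewrite !inE eqxx.
have zDS : z \in D :\: S by rewrite inE zS zD.
have wD : w \in D by move: wDzS; rewrite !inE => /andP[_ /andP[]].
rewrite /thresholdK; suff -> : \big[Num.max/0]_(u in D :\: S) v u =
          \big[Num.max/0]_(u in (D :\ z) :\: S) v u by [].
rewrite (bigmaxD1 _ (fun u => u \in D :\: S) _ zDS).
rewrite (eq_bigl (fun u => u \in (D :\ z) :\: S)).
  exact/max_idPr/(le_trans (zmin wD) (le_bigmax_cond _ _ wDzS)).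
by move=> u; rewrite !inE -andbA [(u \in D) && _]andbC.
Qed.
End RemoveMinimum.

(* Marginal identity: the threshold sets containing y have total mass v y,
   i.e. P(y in S') = P(U <= v y).  Induction on #|D|, removing a minimiser. *)
Lemma thresholdK_marginal (D : {set V}) y : y \in D ->
  \sum_(S : {set V} | (S \subset D) && (y \in S)) thresholdK D S = v y.
Proof.
move: {2}#|D| (erefl #|D|) => n; elim: n D y => [|n IH] D y cD yD.
  by move: yD; rewrite (card0_eq cD) inE.
have [z zD zmin] : exists2 z, z \in D & forall w, w \in D -> v z <= v w.
  by case: (arg_minP v yD) => z; exists z.
set D' := D :\ z.
have cD' : #|D'| = n by move: cD; rewrite /D' (cardsD1 z D) zD; case.
rewrite (bigID (fun S : {set V} => z \in S)) /=.
(* Among the sets containing the minimiser z, only D has positive mass. *)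
have -> : \sum_(S : {set V} | (S \subset D) && (y \in S) && (z \in S))
           thresholdK D S = v z.
  rewrite (bigD1 D) /=; last by rewrite subxx yD zD.
  rewrite big1 ?addr0; last first.
    move=> S /andP[/andP[/andP[SD _] zS] SnD].
    have /properP[_ [w wD wS]] : S \proper D by rewrite properEneq SnD SD.
    by apply: (thresholdK_gap zS (_ : w \in D :\: S)); rewrite ?inE ?wS ?zmin.
  rewrite thresholdK_full; apply/le_anti.
  by rewrite (bigmin_le_cond _ _ zD) le_bigmin.
have [<-|yz] := eqVneq z y.
  by rewrite big_pred0 ?addr0 // => S; case: (z \in S); rewrite ?andbF ?andbT.
(* The other sets lie in D' = D :\ z, where the induction hypothesis applies. *)
have yD' : y \in D' by rewrite /D' !inE eq_sym yz yD.
rewrite (eq_bigl (fun S : {set V} => (S \subset D') && (y \in S))); last first.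
  by move=> S; rewrite /D' subsetD1 andbAC.
rewrite (bigD1 D') /=; last by rewrite subxx yD'.
rewrite thresholdK_minus_min // -(IH D' y cD' yD') [RHS](bigD1 D') /=; last first.
  by rewrite subxx yD'.
rewrite thresholdK_full addrA [v z + _]addrC subrK; congr (_ + _).
apply: eq_bigr => S /andP[/andP[SD' _] SnD'].
have /properP[_ [w wD' wS]] : S \proper D' by rewrite properEneq SnD' SD'.
by apply: (thresholdK_remove_min zD zmin SD' (_ : w \in _)); rewrite inE wS.
Qed.
End ThresholdKernel.

Lemma markov_strict (R : realFieldType) (I : finType) (W g : I -> R) (P : pred I)
    (c : R) :
  (forall i, 0 <= W i) -> (forall i, P i -> c < g i) -> (forall i, ~~ P i -> g i = 0) ->
  0 < \sum_(i | P i) W i -> c * \sum_(i | P i) W i < \sum_i W i * g i.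
Proof.
move=> W_ge0 c_lt_g g_off WP_gt0.
have [i /andP[Pi Wi_gt0]] :=
  psumr_neq0P (fun i _ => W_ge0 i) (elimN eqP (lt0r_neq0 WP_gt0)).
rewrite [X in _ < X](bigID P) /= [X in _ + X]big1 ?addr0; last first.
  by move=> j /g_off ->; rewrite mulr0.
rewrite mulr_sumr -subr_gt0 -sumrB (bigD1 i) //=.
have gap j : W j * g j - c * W j = W j * (g j - c).
  by rewrite mulrBr [c * _]mulrC.
apply: ltr_pwDl; first by rewrite gap mulr_gt0 // subr_gt0 c_lt_g.
apply: sumr_ge0 => j /andP[Pj _].
by rewrite gap mulr_ge0 // subr_ge0 ltW // c_lt_g.
Qed.

Section Paths.
Variable U : finType.

Definition fcons n (u : U) (t : {ffun 'I_n -> U}) : {ffun 'I_n.+1 -> U} :=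
  [ffun i => if unlift ord0 i is Some j then t j else u].

Lemma fcons0 n u (t : {ffun 'I_n -> U}) : fcons u t ord0 = u.
Proof. by rewrite ffunE unlift_none. Qed.

Lemma fconsS n u (t : {ffun 'I_n.+1 -> U}) (j : nat) :
  (j <= n)%N -> fcons u t (inord j.+1) = t (inord j).
Proof.
move=> jn; have -> : (inord j.+1 : 'I_n.+2) = lift ord0 (inord j : 'I_n.+1).
  by apply: val_inj; rewrite /= /bump /= !inordK.
by rewrite ffunE liftK.
Qed.

Lemma inord0E n : (inord 0 : 'I_n.+1) = ord0.
Proof. by apply: val_inj; rewrite /= inordK. Qed.

Lemma sum_fcons (M : nmodType) n (F : {ffun 'I_n.+1 -> U} -> M) :
  \sum_f F f = \sum_u \sum_(t : {ffun 'I_n -> U}) F (fcons u t).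
Proof.
rewrite pair_big /= (reindex (fun p : U * {ffun 'I_n -> U} => fcons p.1 p.2)) //=.
exists (fun f : {ffun 'I_n.+1 -> U} => (f ord0, [ffun j => f (lift ord0 j)])).
  move=> [u t] _ /=; rewrite fcons0; congr (_, _).
  by apply/ffunP => j; rewrite !ffunE liftK.
move=> f _; apply/ffunP => i; rewrite ffunE; case: unliftP => [j ->|->] //.
by rewrite ffunE.
Qed.
End Paths.

Section PathSums.
Variables (R : realFieldType) (U : finType) (k : U -> U -> R).

Definition path_weight n (s : U) (f : {ffun 'I_n.+1 -> U}) : R :=
  (f ord0 == s)%:R * \prod_(i < n) k (f (inord i)) (f (inord i.+1)).

Fixpoint stopped_payoff (st : pred U) (val fin : U -> R) n (g : nat -> U) : R :=
  if st (g 0%N) then val (g 0%N) else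
  if n is n'.+1 then stopped_payoff st val fin n' (fun i => g i.+1)
  else fin (g 0%N).

Fixpoint stopped_value (st : pred U) (val fin : U -> R) n (s : U) : R :=
  if st s then val s else
  if n is n'.+1 then \sum_s' k s s' * stopped_value st val fin n' s'
  else fin s.

Lemma path_weight_ge0 n s (f : {ffun 'I_n.+1 -> U}) :
  (forall s s', 0 <= k s s') -> 0 <= path_weight s f.
Proof. by move=> k_ge0; rewrite mulr_ge0 ?ler0n // prodr_ge0. Qed.

Lemma stopped_payoff_ext (st : pred U) (val fin : U -> R) n (g g' : nat -> U) :
  (forall i, (i <= n)%N -> g i = g' i) ->
  stopped_payoff st val fin n g = stopped_payoff st val fin n g'.
Proof.
elim: n g g' => [|n IH] g g' eqg /=; first by rewrite eqg.
by rewrite eqg // (IH _ (fun i => g' i.+1)) // => i ?; apply: eqg.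
Qed.

Lemma path_weight_cons n s u (t : {ffun 'I_n.+1 -> U}) :
  path_weight s (fcons u t) =
  (u == s)%:R * (k u (t ord0) * path_weight (t ord0) t).
Proof.
rewrite /path_weight fcons0 big_ord_recl inord0E fcons0 (fconsS _ _ (leq0n n)) inord0E.
rewrite eqxx mul1r; congr (_ * (_ * _)); apply: eq_bigr => i _.
by rewrite lift0 !fconsS // ltnW.
Qed.

Lemma stopped_payoff_cons (st : pred U) (val fin : U -> R) n u
    (t : {ffun 'I_n.+1 -> U}) :
  stopped_payoff st val fin n.+1 (fun i => fcons u t (inord i)) =
  if st u then val u else stopped_payoff st val fin n (fun i => t (inord i)).
Proof.
rewrite /= inord0E fcons0; case: (st u) => //.
by apply: stopped_payoff_ext => i ilen; rewrite fconsS.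
Qed.

Lemma sum_path_start n s (F : {ffun 'I_n.+1 -> U} -> R) :
  \sum_f path_weight s f * F f =
  \sum_(t : {ffun 'I_n -> U}) path_weight s (fcons s t) * F (fcons s t).
Proof.
rewrite sum_fcons (bigD1 s) //= [X in _ + X]big1 ?addr0 // => u us.
by apply: big1 => t _; rewrite /path_weight fcons0 (negbTE us) !mul0r.
Qed.

Lemma sum_first_step n s (F : {ffun 'I_n.+1 -> U} -> R) :
  \sum_(t : {ffun 'I_n.+1 -> U}) k s (t ord0) * path_weight (t ord0) t * F t =
  \sum_s' k s s' * \sum_(t : {ffun 'I_n.+1 -> U}) path_weight s' t * F t.
Proof.
under [RHS]eq_bigr do rewrite mulr_sumr.
rewrite exchange_big /=; apply: eq_bigr => t _.
rewrite (bigD1 (t ord0)) //= big1 ?addr0 => [|s' s't]; first by rewrite !mulrA.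
by rewrite /path_weight eq_sym (negbTE s't) !mul0r mulr0.
Qed.

Lemma stopped_payoff_never (val : U -> R) n (g : nat -> U) :
  stopped_payoff pred0 val (fun _ => 1) n g = 1.
Proof. by elim: n g => [|n IH] g //=. Qed.

Lemma stopped_payoff_unstopped (st : pred U) (val : U -> R) n (g : nat -> U) :
  (forall i, (i <= n)%N -> ~~ st (g i)) ->
  stopped_payoff st val (fun _ => 1) n g = 1.
Proof.
elim: n g => [|n IH] g nst /=; rewrite (negbTE (nst 0%N _)) //.
by apply: IH => i ?; apply: nst.
Qed.

Lemma stopped_payoff_stopped (st : pred U) (val fin : U -> R) n (g : nat -> U) i :
  (i <= n)%N -> st (g i) ->
  exists2 j, st (g j) & stopped_payoff st val fin n g = val (g j).
Proof.
elim: n g i => [|n IH] g i lein sti /=.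
  by move: lein sti; rewrite leqn0 => /eqP-> st0; rewrite st0; exists 0%N.
case: ifP => [st0|nst0]; first by exists 0%N.
case: i lein sti => [|i] lein sti; first by rewrite sti in nst0.
by have [j stj ->] := IH (fun i => g i.+1) i lein sti; exists j.+1.
Qed.

Section Stochastic.
Variable good : pred U.
Hypothesis k_stochastic : forall s, good s -> \sum_s' k s s' = 1.
Hypothesis k_closed : forall s s', good s -> ~~ good s' -> k s s' = 0.

Lemma stopped_value_never (val : U -> R) n s :
  good s -> stopped_value pred0 val (fun _ => 1) n s = 1.
Proof.
elim: n s => [|n IH] s gs //=; rewrite -[RHS](k_stochastic gs).
apply: eq_bigr => s' _; have [gs'|ngs'] := boolP (good s').
  by rewrite IH ?mulr1.
by rewrite k_closed ?mul0r.
Qed.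

Theorem path_sum_stopped (st : pred U) (val fin : U -> R) n s : good s ->
  \sum_(f : {ffun 'I_n.+1 -> U})
     path_weight s f * stopped_payoff st val fin n (fun i => f (inord i)) =
  stopped_value st val fin n s.
Proof.
elim: n st val fin s => [|n IH] st val fin s gs; rewrite sum_path_start.
  rewrite (eq_bigr (fun=> if st s then val s else fin s)); last first.
    by move=> t _; rewrite /path_weight /= inord0E fcons0 eqxx big_ord0 !mul1r.
  by rewrite sumr_const card_ffun card_ord expn0.
under eq_bigr do rewrite path_weight_cons stopped_payoff_cons eqxx mul1r.
rewrite [RHS]/=; case: (st s); last first.
  rewrite sum_first_step; apply: eq_bigr => s' _.
  have [gs'|ngs'] := boolP (good s'); first by rewrite IH.
  by rewrite k_closed ?mul0r.
rewrite -mulr_suml -[RHS]mul1r; congr (_ * _).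
transitivity (\sum_(t : {ffun 'I_n.+1 -> U}) k s (t ord0) * path_weight (t ord0) t *
  stopped_payoff pred0 val (fun _ => 1) n (fun i => t (inord i))).
  by apply: eq_bigr => t _; rewrite stopped_payoff_never mulr1.
rewrite sum_first_step -[RHS](k_stochastic gs); apply: eq_bigr => s' _.
have [gs'|ngs'] := boolP (good s'); last by rewrite k_closed ?mul0r.
by rewrite IH // stopped_value_never ?mulr1.
Qed.

Corollary path_mass1 n s : good s ->
  \sum_(f : {ffun 'I_n.+1 -> U}) path_weight s f = 1.
Proof.
move=> gs; rewrite -(stopped_value_never (fun _ => 1) n gs).
rewrite -(path_sum_stopped pred0 (fun _ => 1) (fun _ => 1) n gs).
by apply: eq_bigr => f _; rewrite stopped_payoff_never mulr1.
Qed.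

Lemma stopped_markov (st : pred U) (val : U -> R) (c : R) n s :
  (forall u u', 0 <= k u u') -> good s -> (forall u, st u -> c < 1 - val u) ->
  let P_stop := \sum_(f : {ffun 'I_n.+1 -> U} | [exists t, st (f t)]) path_weight s f in
  0 < P_stop -> c * P_stop < 1 - stopped_value st val (fun=> 1) n s.
Proof.
move=> k_ge0 gs gap /= P_gt0.
rewrite -(path_sum_stopped st val _ n gs) -[X in _ < X - _](path_mass1 n gs) -sumrB.
under [X in _ < X]eq_bigr do rewrite -[X in X - _]mulr1 -mulrBr.
apply: markov_strict => // f; first exact: path_weight_ge0.
  case/existsP=> t st_t.
  have := @stopped_payoff_stopped st val (fun=> 1) n (fun i => f (inord i)) t
    (ltn_ord t).
  by rewrite /= inord_val => /(_ st_t) [j /gap gap_j ->].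
by move/existsPn=> nst; rewrite stopped_payoff_unstopped ?subrr.
Qed.
End Stochastic.
End PathSums.

Section LazyWalk.
Variables (R : realFieldType) (V : finType) (e : rel V).
Hypotheses (e_sym : symmetric e) (e_irr : irreflexive e).
Hypothesis deg_pos : forall v : V, (0 < deg e v)%N.

Let deg_neq0 y : (deg e y)%:R != 0 :> R.
Proof. by rewrite pnatr_eq0 -lt0n. Qed.

Lemma lazyp_ge0 x y : 0 <= lazyp R e x y.
Proof.
rewrite /lazyp; case: eqP => _; first by rewrite mul1r invr_ge0 ler0n.
by case: (e x y) => //; rewrite mul1r invr_ge0 mulr_ge0 // ler0n.
Qed.

Lemma lazyp_stochastic x : \sum_y lazyp R e x y = 1.
Proof.
rewrite (bigD1 x) //= /lazyp eqxx.
rewrite (eq_bigr (fun y => if e x y then 1 / (2 * (deg e x)%:R) else 0)); last first.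
  by move=> y yx; rewrite eq_sym (negbTE yx).
rewrite -big_mkcondr /= (eq_bigl (fun y => y \in [set y | e x y])); last first.
  move=> y; rewrite inE; case exy: (e x y); rewrite ?andbF ?andbT //.
  by apply/eqP=> yx; rewrite yx e_irr in exy.
rewrite sumr_const -/(deg e x) -[_ *+ deg e x]mulr_natr !mul1r invfM -mulrA mulVf //.
by rewrite mulr1 [RHS](splitr 1) !mul1r.
Qed.

Lemma lazyp_reversible x y :
  (deg e x)%:R * lazyp R e x y = (deg e y)%:R * lazyp R e y x.
Proof.
rewrite /lazyp; have [->|xy] := eqVneq x y; first by [].
rewrite e_sym; case: (e y x); last by rewrite !mulr0.
have half z : (deg e z)%:R * (1 / (2 * (deg e z)%:R)) = 1 / 2 :> R.
  by rewrite mul1r invfM mulrCA mulfV ?mulr1 ?mul1r.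
by rewrite !half.
Qed.

Lemma lazypS_ge0 x S : 0 <= lazypS R e x S.
Proof. by apply: sumr_ge0 => y _; apply: lazyp_ge0. Qed.

Lemma lazypS_le1 x S : lazypS R e x S <= 1.
Proof.
rewrite -(lazyp_stochastic x) /lazypS [X in _ <= X](bigID (mem S)) /= lerDl.
by apply: sumr_ge0 => y _; apply: lazyp_ge0.
Qed.

Lemma mu_ge0 S : 0 <= mu R e S.
Proof. by apply: sumr_ge0 => y _; rewrite ler0n. Qed.

Lemma mu_gt0 (S : {set V}) y : y \in S -> 0 < mu R e S.
Proof.
move=> yS; rewrite /mu (bigD1 y) //= ltr_pwDl ?ltr0n //.
by apply: sumr_ge0 => z _; rewrite ler0n.
Qed.

Lemma mu_set0 : mu R e set0 = 0.
Proof. by rewrite /mu big_set0. Qed.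

Lemma espK_marginal S y :
  \sum_(S' : {set V} | y \in S') espK R e S S' = lazypS R e y S.
Proof.
rewrite -(thresholdK_marginal (fun z => lazypS_ge0 z S) (fun z => lazypS_le1 z S)
  (in_setT y)).
by apply: eq_big => [S'|S' _]; rewrite ?subsetT // /thresholdK /espK setTD.
Qed.

Lemma espKhat_ge0 S S' : 0 <= espKhat R e S S'.
Proof.
by rewrite /espKhat mulr_ge0 ?divr_ge0 ?mu_ge0 // /espK le_max lexx.
Qed.

Lemma espKhat_to_set0 S : espKhat R e S set0 = 0.
Proof. by rewrite /espKhat mu_set0 !mul0r. Qed.

Lemma espKhat_closed S S' : S != set0 -> ~~ (S' != set0) -> espKhat R e S S' = 0.
Proof. by move=> _; rewrite negbK => /eqP->; apply: espKhat_to_set0. Qed.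

Definition mu_avg (f : V -> R) (S : {set V}) : R :=
  (\sum_(y in S) (deg e y)%:R * f y) / mu R e S.

(* mu(S') in the volume bias cancels the normalisation of mu_avg on S'. *)
Lemma espKhat_mu_avg f S S' :
  espKhat R e S S' * mu_avg f S' =
  espK R e S S' * (\sum_(y in S') (deg e y)%:R * f y) / mu R e S.
Proof.
have [->|/set0Pn [y yS']] := eqVneq S' set0.
  by rewrite espKhat_to_set0 big_set0 mul0r mulr0 mul0r.
have muS'0 : mu R e S' != 0 by rewrite gt_eqF // (mu_gt0 yS').
rewrite /espKhat /mu_avg mulrC -!mulrA mulKf //.
by rewrite [RHS]mulrCA [_^-1 * espK _ _ _ _]mulrC.
Qed.

Lemma intertwining f S :
  \sum_S' espKhat R e S S' * mu_avg f S' =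
  mu_avg (fun z => \sum_y lazyp R e z y * f y) S.
Proof.
under eq_bigr do rewrite espKhat_mu_avg.
rewrite -mulr_suml /mu_avg; congr (_ / _).
transitivity (\sum_y (deg e y)%:R * f y * lazypS R e y S).
  under eq_bigr do rewrite mulr_sumr big_mkcond /=.
  rewrite exchange_big /=; apply: eq_bigr => y _.
  rewrite -espK_marginal mulr_sumr [RHS]big_mkcond /=; apply: eq_bigr => S' _.
  by case: (y \in S'); rewrite ?mulr0 // mulrC.
under eq_bigr do rewrite /lazypS mulr_sumr.
rewrite exchange_big /=; apply: eq_bigr => z _; rewrite mulr_sumr.
by apply: eq_bigr => y _; rewrite mulrA -lazyp_reversible mulrAC.
Qed.

Lemma mu_avg_le f g S : (forall y, f y <= g y) -> mu_avg f S <= mu_avg g S.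
Proof.
move=> fg; rewrite /mu_avg ler_wpM2r ?invr_ge0 ?mu_ge0 //.
by apply: ler_sum => y _; rewrite ler_wpM2l ?ler0n.
Qed.

Lemma mu_avg_cst1 S : S != set0 -> mu_avg (fun=> 1) S = 1.
Proof.
case/set0Pn=> y yS; rewrite /mu_avg (eq_bigr (fun y => (deg e y)%:R)) => [|z _].
  by rewrite mulfV // gt_eqF // (mu_gt0 yS).
by rewrite mulr1.
Qed.

Lemma mu_avg_indicator (A S : {set V}) : S != set0 ->
  mu_avg (fun z => (z \in A)%:R) S = 1 - mu R e (S :\: A) / mu R e S.
Proof.
case/set0Pn=> y yS; have mu0 : mu R e S != 0 by rewrite gt_eqF // (mu_gt0 yS).
rewrite /mu_avg -[X in X - _](mulfV mu0) -mulrBl; congr (_ / _).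
rewrite /mu (big_setID A) /= [in RHS](big_setID A) /= addrK.
rewrite [X in _ + X]big1 ?addr0 => [|z]; last first.
  by rewrite inE => /andP[/negbTE -> _]; rewrite mulr0.
by apply: eq_bigr => z; rewrite inE => /andP[_ ->]; rewrite mulr1.
Qed.

Lemma mu_avg_set1 f x : mu_avg f [set x] = f x.
Proof. by rewrite /mu_avg /mu !big_set1 mulrAC mulfV ?mul1r. Qed.

Lemma espKhat_stochastic S : S != set0 -> \sum_S' espKhat R e S S' = 1.
Proof.
move=> S0; transitivity (\sum_S' espKhat R e S S' * mu_avg (fun=> 1) S').
  apply: eq_bigr => S' _; have [->|S'0] := eqVneq S' set0.
    by rewrite espKhat_to_set0 !mul0r.
  by rewrite mu_avg_cst1 ?mulr1.
rewrite intertwining -[RHS](mu_avg_cst1 S0) /mu_avg; congr (_ / _).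
apply: eq_bigr => z _; under eq_bigr do rewrite mulr1.
by rewrite lazyp_stochastic.
Qed.

(* survival A n y: probability that the lazy walk started at y stays in A
   at all times 0, ..., n. *)
Definition survival (A : {set V}) n (y : V) : R :=
  stopped_value (lazyp R e) (fun y => y \notin A) (fun=> 0) (fun=> 1) n y.

Lemma survival_bounds A n y : 0 <= survival A n y <= (y \in A)%:R.
Proof.
elim: n y => [|n IH] y; rewrite /survival /=.
all: case: (boolP (y \in A)) => yA //=; rewrite ?lexx ?ler01 //.
apply/andP; split.
  by apply: sumr_ge0 => z _; rewrite mulr_ge0 ?lazyp_ge0 //; case/andP: (IH z).
rewrite -[leRHS](lazyp_stochastic y) ler_sum // => z _.
rewrite ler_piMr ?lazyp_ge0 //; case/andP: (IH z) => _ /le_trans; apply.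
by case: (z \in A); rewrite ?ler01.
Qed.

Lemma survival_step A n y :
  survival A n.+1 y <= \sum_z lazyp R e y z * survival A n z.
Proof.
rewrite {1}/survival /=; case: ifP => _ //.
apply: sumr_ge0 => z _; rewrite mulr_ge0 ?lazyp_ge0 //.
by case/andP: (survival_bounds A n z).
Qed.

(* This is the supermartingale argument, made finite by backward induction. *)
Lemma survival_le_esp A (st : pred {set V}) n S : S != set0 ->
  mu_avg (survival A n) S <=
  stopped_value (espKhat R e) st (fun S => 1 - mu R e (S :\: A) / mu R e S)
    (fun=> 1) n S.
Proof.
have capped m S' : S' != set0 ->
    mu_avg (survival A m) S' <= 1 - mu R e (S' :\: A) / mu R e S'.
  move=> S'0; rewrite -mu_avg_indicator //; apply: mu_avg_le => y.
  by case/andP: (survival_bounds A m y).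
elim: n S => [|n IH] S S0 /=; case: ifP => _; rewrite ?capped //.
  rewrite -(mu_avg_cst1 S0); apply: mu_avg_le => y.
  case/andP: (survival_bounds A 0 y) => _ /le_trans; apply.
  by case: (y \in A); rewrite ?ler01.
apply: le_trans (mu_avg_le _ (survival_step A n)) _.
rewrite -intertwining; apply: ler_sum => S' _.
have [->|S'0] := eqVneq S' set0; first by rewrite espKhat_to_set0 !mul0r.
by rewrite ler_wpM2l ?espKhat_ge0 ?IH.
Qed.

Lemma survival_escape A T x : survival A T x = 1 - escape_eps R e x T A.
Proof.
pose escapes (X : {ffun 'I_T.+1 -> V}) := [exists j : 'I_T.+1, X j \notin A].
have walk_stoch y : predT y -> \sum_z lazyp R e y z = 1 by rewrite lazyp_stochastic.
have walk_closed y z : predT y -> ~~ predT z -> lazyp R e y z = 0 by [].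
rewrite -(path_mass1 walk_stoch walk_closed T (isT : predT x)) (bigID escapes) /=.
rewrite addrC addrK /survival -(path_sum_stopped walk_stoch walk_closed) //.
rewrite (bigID escapes) /= big1 ?add0r => [|X /existsP [j Xj]].
  apply: eq_bigr => X /existsPn stays.
  by rewrite stopped_payoff_unstopped ?mulr1 // => i _; have := stays (inord i).
have := @stopped_payoff_stopped R V (fun y => y \notin A) (fun=> 0) (fun=> 1)
  T (fun i => X (inord i)) j (ltn_ord j).
by rewrite /= inord_val => /(_ Xj) [i _ ->]; rewrite mulr0.
Qed.

Lemma escape_eps_ge0 A T x : 0 <= escape_eps R e x T A.
Proof. by apply: sumr_ge0 => X _; apply: path_weight_ge0 => ? ?; apply: lazyp_ge0. Qed.

Lemma escape_ge_esp_stopped A T x (st : pred {set V}) :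
  1 - stopped_value (espKhat R e) st (fun S => 1 - mu R e (S :\: A) / mu R e S)
        (fun=> 1) T [set x] <= escape_eps R e x T A.
Proof.
rewrite lerBlDr -lerBlDl -survival_escape -mu_avg_set1 survival_le_esp //.
by apply/set0Pn; exists x; rewrite inE.
Qed.
End LazyWalk.

Theorem lemma2 (R : realFieldType) (V : finType) (e : rel V)
  (e_sym : symmetric e) (e_irr : irreflexive e)
  (deg_pos : forall v : V, (0 < deg e v)%N)
  (x : V) (A : {set V}) (T : nat) (lam : R) (lam_pos : 0 < lam) :
  PhatEvent R e x T
    (fun S => [exists t : 'I_T.+1,
        lam * escape_eps R e x T A < mu R e (S t :\: A) / mu R e (S t)])
  < lam^-1.
Proof.
set eps := escape_eps R e x T A; set c := lam * eps.
pose frac (S : {set V}) := mu R e (S :\: A) / mu R e S.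
(* If Ph >= 1/lam, Markov at the first time the proportion outside A exceeds c
   gives c * Ph < eps, while c * Ph = eps * (lam * Ph) >= eps. *)
rewrite ltNge; apply/negP => Ph_ge; set Ph := PhatEvent _ _ _ _ _ in Ph_ge.
have Ph_gt0 : 0 < Ph by apply: lt_le_trans Ph_ge; rewrite invr_gt0.
have lamPh_ge1 : 1 <= lam * Ph by rewrite -(mulfV (lt0r_neq0 lam_pos)) ler_wpM2l // ltW.
have gap S : c < frac S -> c < 1 - (1 - frac S) by rewrite opprB addrCA subrr addr0.
have x0 : [set x] != set0 by apply/set0Pn; exists x; rewrite inE.
have := stopped_markov (espKhat_stochastic R e_sym e_irr deg_pos) (espKhat_closed R e)
  (st := fun S => c < frac S) (val := fun S => 1 - frac S) (espKhat_ge0 R e)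
  x0 gap Ph_gt0.
move/lt_le_trans => /(_ _ (escape_ge_esp_stopped R e_sym e_irr deg_pos A T x _)).
by rewrite ltNge /c mulrAC ler_peMl ?escape_eps_ge0.
Qed.
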